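(* Let $\ell\geq 2$ and $n=4\ell+2$. Then $\mathrm{capt}(H(n),3)=2\ell+3(n-4)$.
   Context: The graph $H(7)$ has vertex set $\{1,\dots,7\}$: vertices $6,2,1,4$ form a path $6-2-1-4$; vertices $3$ and $5$ are each adjacent to all of $6,2,1,4$ and not adjacent to each other; vertex $7$ is adjacent exactly to $6$, $4$ and $3$. For $n\geq 8$, $H(n)$ is obtained from $H(n-1)$ by adding vertex $n$ adjacent exactly to $n-1$, $n-3$ and $n-4$. All graphs are reflexive (every vertex is considered adjacent to itself). The game of $k$ cops and $m$ robbers on $G$: in round 0 the cops first choose starting vertices, then the robbers choose theirs. In each round $i\geq 1$, all cops move (each to an adjacent vertex or staying), then all robbers move likewise. Several players may occupy the same vertex. Whenever a cop and some robbers occupy the same vertex, those robbers are captured and take no further part in the game. Both sides have full information. The cops win if all robbers are captured after finitely many rounds. For a cop-win graph $G$, $\mathrm{capt}(G,m)$ is the index of the round in which the last robber is captured when one cop plays to minimize this index and $m$ robbers play to maximize it. ($H(n)$ is cop-win.) *)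

From mathcomp Require Import all_boot all_order.
Set Implicit Arguments. Unset Strict Implicit. Unset Printing Implicit Defensive.

(* Graph: vertex type T (finite), adjacency relation adj (assumed reflexive,
   i.e. staying put is a legal move; for H(n) below adjacency includes u = v). *)

(* A robber configuration is the list of positions of the robbers still in
   the game.  [robber_moves adj R R'] : each robber in R moves (or stays) to
   the corresponding position in R'. *)
Definition robber_moves (T : eqType) (adj : rel T) (R R' : seq T) : bool :=
  all2 adj R R'.

(* [cop_wins_within adj k c R] : it is the cop's turn to move, the cop is at c,
   the remaining robbers are at R (none at c); the cop can ensure that every
   remaining robber is captured within the next k rounds (a round = cop move
   then robbers' move; robbers on the cop's vertex are removed immediately). *)
Fixpoint cop_wins_within (T : eqType) (adj : rel T) (k : nat) (c : T) (R : seq T)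
  : Prop :=
  match k with
  | 0 => R = [::]
  | k'.+1 =>
      R = [::] \/
      exists2 c' : T, adj c c' &
        forall R'' : seq T,
          robber_moves adj [seq r <- R | r != c'] R'' ->
          cop_wins_within adj k' c' [seq r <- R'' | r != c']
  end.

(* Round 0: the cop picks a start vertex, then the m robbers pick theirs.
   [cop_guarantees adj m k] : the cop can force the last robber to be
   captured in a round of index at most k. *)
Definition cop_guarantees (T : eqType) (adj : rel T) (m k : nat) : Prop :=
  exists c0 : T, forall R0 : seq T, size R0 = m ->
    cop_wins_within adj k c0 [seq r <- R0 | r != c0].

(* capt(G, m) = k : the value of the game (min over cop, max over robbers of
   the round index in which the last robber is captured). *)
Definition capt_is (T : eqType) (adj : rel T) (m k : nat) : Prop :=
  cop_guarantees adj m k /\ forall j, j < k -> ~ cop_guarantees adj m j.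

(* [H_lt u v] for u < v : the edge {u,v} is present (in any H(n), n >= v). *)
Definition H_lt (u v : nat) : bool :=
  if v <= 7 then
    (u, v) \in [:: (1,2); (2,6); (1,4);
                   (3,6); (2,3); (1,3); (3,4);
                   (5,6); (2,5); (1,5); (4,5);
                   (6,7); (4,7); (3,7)]
  else [|| u == v - 1, u == v - 3 | u == v - 4].

Definition H_adj (u v : nat) : bool :=
  [|| u == v, (u < v) && H_lt u v | (v < u) && H_lt v u].

(* H(n) on the finite vertex type 'I_n, where i : 'I_n stands for label i+1. *)
Definition H (n : nat) : rel 'I_n := fun i j => H_adj i.+1 j.+1.
Arguments H n i j : clear implicits.

From mathcomp Require Import all_boot all_order.
From Stdlib Require Import ZArith Lia.
Set Implicit Arguments. Unset Strict Implicit. Unset Printing Implicit Defensive.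

(* Numbering the vertices 1..n, H(n) is the graph in which u and v are adjacent when |u - v| is
   1, 3 or 4, plus the edge 1-3.  Against a lone robber at r, the cop at c needs capt1 n c r
   rounds: the greedy move cop_step lowers capt1 every round, and the robber's reply evade lowers
   it by at most one, except in the trap (cop on n - 4, robber on n) where every move of the
   robber ends next to the cop.

   Upper bound: the cop starts on 1 and hunts the robbers one at a time.  From 1 or 2 a hunt takes
   at most n - 4 rounds, and from anywhere the cop walks back to 1 or 2 in at most l rounds,
   which gives (n - 4) + 2 (l + (n - 4)) = 2l + 3(n - 4).

   Lower bound: the three robbers start together on a vertex r with capt1 n c r >= n - 4 and move
   as a block along evade; a block of j robbers is worth capt1 + (j - 1)(l + n - 4) rounds.  In
   the trap the block scatters onto n - 3, n - 1 and n; the cop catches at most one robber there,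
   and the others regroup in a position worth at least one round less. *)

(** * The strip model and one-robber capture times *)

Local Open Scope Z_scope.

Definition strip_adj (u v : Z) : bool :=
  [|| u =? v, u + 1 =? v, v + 1 =? u, u + 3 =? v, v + 3 =? u, u + 4 =? v, v + 4 =? u,
      (u =? 1) && (v =? 3) | (u =? 3) && (v =? 1)].

Lemma strip_adjP u v :
  reflect (v = u \/ v = u + 1 \/ u = v + 1 \/ v = u + 3 \/ u = v + 3 \/ v = u + 4 \/ u = v + 4
           \/ (u = 1 /\ v = 3) \/ (u = 3 /\ v = 1))
          (strip_adj u v).
Proof.
by apply: (iffP idP); rewrite /strip_adj /is_true !Bool.orb_true_iff !Bool.andb_true_iff !Z.eqb_eq;
  lia.
Qed.

Definition step_down (c : Z) : Z := if c <=? 5 then 1 else c - 4.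

Definition capt_via_home (n c : Z) : Z := n - 4 + (c + 1) / 4.

(* [capt1 n c r] bounds the number of rounds a lone robber at [r] survives against the cop at
   [c], the cop being to move; [cop_step] and [evade] are the two players' strategies for it. *)
Definition capt1 (n c r : Z) : Z :=
  if r - c <=? -5 then capt_via_home n c
  else if r - c <=? -3 then 1
  else if r - c <=? -2 then (if c <=? 3 then 1 else capt_via_home n c)
  else if r - c <=? 1 then 1
  else if r - c <=? 2 then (if c <=? 1 then 1 else capt_via_home n c)
  else if r - c <=? 4 then 1
  else if c <=? 1 then
    (if (r - c) mod 4 <=? 0 then n - 7 else if (r - c) mod 4 <=? 1 then n - 4
     else if (r - c) mod 4 <=? 2 then n - 5 else n - 6)
  else if (r - c) mod 4 <=? 0 then n - c - 6 else if (r - c) mod 4 <=? 1 then n - c - 3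
  else if (r - c) mod 4 <=? 2 then capt_via_home n c else n - c - 5.

Definition cop_step (c r : Z) : Z :=
  if r - c <=? -5 then step_down c
  else if r - c <=? -3 then r
  else if r - c <=? -2 then (if c <=? 3 then r else step_down c)
  else if r - c <=? 1 then r
  else if r - c <=? 2 then (if c <=? 1 then r else step_down c)
  else if r - c <=? 4 then r
  else if (r - c) mod 4 <=? 0 then c + 4 else if (r - c) mod 4 <=? 1 then c + 1
  else if (r - c) mod 4 <=? 2 then (if c <=? 1 then c + 2 else step_down c)
  else c + 3.

Definition evade (n r c : Z) : Z :=
  if c <=? 1 then
    (if r mod 4 <=? 0 then (if r <=? 7 then r + 3 else r - 1)
     else if r mod 4 <=? 1 then r + 1
     else if r mod 4 <=? 2 then (if r <=? 5 then r + 4 else r)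
     else (if r <=? 6 then r + 3 else r - 1))
  else if r - c <=? -5 then r
  else if r - c <=? -4 then (if r <=? 1 then 3 else r - 1)
  else if r - c <=? -3 then r + 1
  else if r - c <=? -2 then (if r <=? 1 then 5 else r)
  else if r - c <=? -1 then (if c <=? 2 then 4 else if c <=? 3 then 5 else r - 1)
  else if r - c <=? 0 then r
  else if (r - c) mod 4 <=? 1 then (if n <=? r then r - 3 else r + 1)
  else if (r - c) mod 4 <=? 2 then r else r - 1.

(* Coq's [assert]/[destruct] rather than ssreflect's [have ->]/[case:], which are several times
   slower on these goals. *)
Ltac decide_ifs :=
  repeat match goal with
  | |- context [if (?x <=? ?y) then _ else _] =>
    first [ let E := fresh in
            assert (E : (x <=? y) = true) by (apply Z.leb_le; lia); rewrite E; clear E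
          | let E := fresh in
            assert (E : (x <=? y) = false) by (apply Z.leb_gt; lia); rewrite E; clear E
          | destruct (Z.leb_spec x y) ]
  end.

Ltac zlia := Z.to_euclidean_division_equations; lia.

Ltac solve_capt1 := rewrite /capt1 /capt_via_home; decide_ifs; zlia.

Ltac case_or := repeat match goal with H : _ \/ _ |- _ => destruct H end.

Lemma nonadj_cases c r : 1 <= c -> 1 <= r -> ~~ strip_adj c r ->
  r + 5 <= c \/ (r + 2 = c /\ 4 <= c) \/ (r = c + 2 /\ 2 <= c) \/ c + 5 <= r.
Proof. by move=> ? ? /strip_adjP; lia. Qed.

Section CaptureTime.

Variables l n : Z.
Hypotheses (hl : 2 <= l) (hn : n = 4 * l + 2).

Lemma capt1_gt0 c r : 1 <= c <= n -> 1 <= r <= n -> 1 <= capt1 n c r.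
Proof. by move=> *; solve_capt1. Qed.

Lemma cop_step_adj c r : 1 <= c <= n -> 1 <= r <= n -> ~~ strip_adj c r ->
  1 <= cop_step c r <= n /\ strip_adj c (cop_step c r).
Proof.
move=> [c_ge1 c_le] [r_ge1 r_le] /(nonadj_cases c_ge1 r_ge1) far_cr.
by rewrite /cop_step /step_down; case_or; decide_ifs; (split; [lia | apply/strip_adjP; lia]).
Qed.

Lemma cop_step_decreases c r r' : 1 <= c <= n -> 1 <= r <= n -> 1 <= r' <= n ->
  ~~ strip_adj c r -> strip_adj r r' -> capt1 n (cop_step c r) r' < capt1 n c r.
Proof.
move=> [c_ge1 c_le] [r_ge1 r_le] r'_range /(nonadj_cases c_ge1 r_ge1) far_cr /strip_adjP adj_rr'.
by rewrite /cop_step /step_down; case_or; decide_ifs; solve_capt1.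
Qed.

Lemma capt1_from_home h r : h = 1 \/ h = 2 -> 1 <= r <= n -> capt1 n h r <= n - 4.
Proof. by case=> -> ?; solve_capt1. Qed.

Lemma evade_spec c r c' : 1 <= c <= n -> 1 <= r <= n -> 1 <= c' <= n ->
  ~~ strip_adj c r -> strip_adj c c' -> ~ (c' = n - 4 /\ r = n) ->
  let t := evade n r c' in
  (1 <= t <= n /\ strip_adj r t /\ ~~ strip_adj c' t) /\ capt1 n c r <= capt1 n c' t + 1.
Proof.
move=> [c_ge1 c_le] [r_ge1 r_le] c'_range /(nonadj_cases c_ge1 r_ge1) far_cr /strip_adjP adj_cc'
  not_trap.
rewrite /evade; case_or; decide_ifs;
  (split; [split; [zlia | split; apply/strip_adjP; zlia] | solve_capt1]).
Qed.

Lemma capt1_trap c : 1 <= c <= n -> strip_adj c (n - 4) -> ~~ strip_adj c n ->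
  capt1 n c n <= 2.
Proof. by move=> c_range /strip_adjP adj_c /strip_adjP far_c; case_or; solve_capt1. Qed.

Lemma capt1_start c : 1 <= c <= n ->
  exists2 r, 1 <= r <= n /\ ~~ strip_adj c r & n - 4 <= capt1 n c r.
Proof.
move=> c_range; exists (if c <=? 1 then 6 else if c + 2 <=? n then c + 2 else c - 2).
  by split; [|apply/strip_adjP]; decide_ifs; lia.
by decide_ifs; solve_capt1.
Qed.

Lemma capt1_near_top :
  capt1 n (n - 8) n = 2 /\ capt1 n (n - 7) n = 2 /\ capt1 n (n - 5) n = 2 /\
  capt1 n (n - 3) (n - 1) = n - 4 + l /\ capt1 n (n - 1) (n - 3) = n - 4 + l /\
  capt1 n n (n - 2) = n - 4 + l /\ capt1 n (n - 8) (n - 2) = n - 6 + l /\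
  capt1 n (n - 7) (n - 2) = 4 /\ capt1 n (n - 4) (n - 2) = n - 5 + l.
Proof. by repeat split; solve_capt1. Qed.

End CaptureTime.

Local Close Scope Z_scope.

(** * One cop against several robbers *)

(* Loaded only now: with mathcomp's zify instances present, the [lia] calls above get slower. *)
From mathcomp Require Import zify ssrZ.
From Stdlib Require ZifyClasses.

Section All2.

Variables (T : eqType) (a : rel T).

Lemma all2_size s t : all2 a s t -> size s = size t.
Proof. by rewrite all2E => /andP[/eqP]. Qed.

Lemma all2_memr s t y : all2 a s t -> y \in t -> exists2 x, x \in s & a x y.
Proof.
elim: s t => [|x s IHs] [|z t] //= /andP[axz st]; rewrite in_cons => /predU1P[->|yt].
  by exists x; rewrite ?mem_head.
by have [w ws awy] := IHs t st yt; exists w; rewrite // in_cons ws orbT.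
Qed.

Lemma all2_meml s t x : all2 a s t -> x \in s -> exists2 y, y \in t & a x y.
Proof.
elim: s t => [|z s IHs] [|y t] //= /andP[azy st]; rewrite in_cons => /predU1P[->|xs].
  by exists y; rewrite ?mem_head.
by have [w wt axw] := IHs t st xs; exists w; rewrite // in_cons wt orbT.
Qed.

Lemma all2_nseq j x y : all2 a (nseq j x) (nseq j y) = (j == 0) || a x y.
Proof. by elim: j => [|j IHj] //=; rewrite IHj; case: (a x y); rewrite ?orbT. Qed.

Lemma size_filter_neq_lt (s : seq T) x : x \in s -> size [seq y <- s | y != x] < size s.
Proof.
move=> xs; rewrite size_filter -(count_predC (fun y => y != x) s) -addn1 leq_add2l.
by rewrite lt0n -lt0n -has_count; apply/hasP; exists x; rewrite //= negbK.
Qed.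

End All2.

Section OneCopGame.

Variables (T : eqType) (a : rel T).

Lemma cop_wins_within_nil k c : cop_wins_within a k c [::].
Proof. by case: k => [|k] /=; [|left]. Qed.

Lemma cop_wins_within_le k k' c R :
  k <= k' -> cop_wins_within a k c R -> cop_wins_within a k' c R.
Proof.
elim: k k' c R => [|k IHk] [|k'] c R //= lekk'; first by move->; left.
case=> [->|[c' cc' win]]; first by left.
by right; exists c' => // R'' mv; apply: IHk (win R'' mv).
Qed.

Fixpoint cop_catches_within (k : nat) (c r : T) : Prop :=
  if k is k'.+1 then
    exists2 c', a c c' &
      c' = r \/ forall r', a r r' -> r' = c' \/ cop_catches_within k' c' r'
  else False.

Variable D : pred T.
Hypothesis adj_closed : forall x y, a x y -> D y.

Lemma robber_moves_closed s t : robber_moves a s t -> all D t.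
Proof.
by move=> mv; apply/allP => y /(all2_memr mv) [x _ /adj_closed].
Qed.

Lemma cop_catches_within_potential (phi : T -> T -> nat) :
  (forall c r, D c -> D r -> 0 < phi c r) ->
  (forall c r, D c -> D r -> ~~ a c r ->
     exists2 c', a c c' & forall r', a r r' -> phi c' r' < phi c r) ->
  forall k c r, D c -> D r -> phi c r <= k -> cop_catches_within k c r.
Proof.
move=> phi_gt0 phi_step; elim=> [|k IHk] c r Dc Dr phi_le /=.
  by have := phi_gt0 c r Dc Dr; lia.
have [acr|nacr] := boolP (a c r); first by exists r; [|left].
have [c' acc' dec] := phi_step c r Dc Dr nacr.
exists c' => //; right=> r' arr'; right.
by apply: IHk; [exact: adj_closed acc' | exact: adj_closed arr' | have := dec r' arr'; lia].
Qed.

(* As soon as some robber is caught, the chased one or another, the cop switches to the strategy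
   for fewer robbers. *)
Lemma cop_catches_then_wins k K c r R :
  cop_catches_within k c r -> r \in R ->
  (forall c' R', D c' -> all D R' -> size R' < size R -> cop_wins_within a K c' R') ->
  cop_wins_within a (k + K) c R.
Proof.
elim: k c r R => [|k IHk] c r R //= [c' acc' chase] rR win_smaller.
right; exists c' => // R'' mv.
have size_R'' : size R'' <= size R by rewrite -(all2_size mv) size_filter count_size.
have size_R3 : size [seq x <- R'' | x != c'] <= size R'' by rewrite size_filter count_size.
have [lt_R3|ge_R3] := ltnP (size [seq x <- R'' | x != c']) (size R).
  apply: cop_wins_within_le (leq_addl k K) _; apply: win_smaller lt_R3.
    exact: adj_closed acc'.
  by apply/allP => x; rewrite mem_filter => /andP[_ /(allP (robber_moves_closed mv))].
have c'R : c' \notin R.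
  by apply/negP => /size_filter_neq_lt; rewrite (all2_size mv); lia.
have {chase} [c'r|chase] := chase; first by rewrite c'r rR in c'R.
have [rc'|rc'] := eqVneq r c'; first by rewrite -rc' rR in c'R.
have rR' : r \in [seq x <- R | x != c'] by rewrite mem_filter rc'.
have [r' r'R'' arr'] := all2_meml mv rR'.
have [r'c'|r'c'] := eqVneq r' c'.
  by move: r'R''; rewrite r'c' => /size_filter_neq_lt; lia.
have {chase} [/eqP|chase] := chase r' arr'; first by rewrite (negPf r'c').
apply: (IHk c' r' _ chase); first by rewrite mem_filter r'c'.
move=> c2 R2 Dc2 DR2 lt2; apply: win_smaller => //.
exact: leq_trans lt2 (leq_trans size_R3 size_R'').
Qed.

Lemma robbers_escape (W : T -> seq T -> nat -> Prop) :
  (forall c R v, W c R v.+1 -> R != [::]) ->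
  (forall c R v c', W c R v.+2 -> a c c' ->
     exists2 R'', robber_moves a [seq r <- R | r != c'] R'' &
                  W c' [seq r <- R'' | r != c'] v.+1) ->
  forall k c R v, W c R v -> k < v -> ~ cop_wins_within a k c R.
Proof.
move=> W_nonempty W_step; elim=> [|k IHk] c R [|v] // WcR lt_kv /=.
  by move/eqP; rewrite (negPf (W_nonempty _ _ _ WcR)).
case: v WcR lt_kv => // v WcR lt_kv.
case=> [/eqP|[c' acc' win]]; first by rewrite (negPf (W_nonempty _ _ _ WcR)).
have [R'' mv WR3] := W_step c R v c' WcR acc'.
exact: IHk WR3 _ (win R'' mv).
Qed.

End OneCopGame.

Section GameMorphism.

Variables (T U : eqType) (a : rel T) (b : rel U) (f : T -> U).
Hypotheses (f_inj : injective f) (f_adj : forall x y, b (f x) (f y) = a x y)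
  (f_onto : forall x v, b (f x) v -> exists y, v = f y).

Lemma map_filter_neq (s : seq T) c :
  map f [seq x <- s | x != c] = [seq y <- map f s | y != f c].
Proof.
by rewrite filter_map; congr map; apply: eq_filter => x /=; rewrite (eqtype.inj_eq f_inj).
Qed.

Lemma robber_moves_map s t : robber_moves b (map f s) (map f t) = robber_moves a s t.
Proof. by elim: s t => [|x s IHs] [|y t] //=; rewrite f_adj IHs. Qed.

Lemma robber_moves_image s t' : robber_moves b (map f s) t' -> exists t, t' = map f t.
Proof.
elim: s t' => [|x s IHs] [|y t'] //=; first by exists [::].
by case/andP=> /f_onto [y' ->] /IHs [t ->]; exists (y' :: t).
Qed.

Lemma cop_wins_within_map k c R :
  cop_wins_within b k (f c) (map f R) <-> cop_wins_within a k c R.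
Proof.
elim: k c R => [|k IHk] c R /=; first by case: R.
split=> [[/eqP|[c'' acc'' win]]|[->|[c' acc' win]]]; first by case: R; left.
- have [c' eq_c''] := f_onto acc''; subst c''; right; exists c'; first by rewrite -f_adj.
  move=> R'' mv; apply/IHk; rewrite map_filter_neq; apply: win.
  by rewrite -map_filter_neq robber_moves_map.
- by left.
- right; exists (f c'); first by rewrite f_adj.
  move=> R'' mv; rewrite -map_filter_neq in mv.
  have [t eq_R''] := robber_moves_image mv; subst R''; rewrite -map_filter_neq IHk.
  by apply: win; rewrite -robber_moves_map.
Qed.

End GameMorphism.

(** * H(n) as a strip graph *)

#[local] Instance Op_Z_eq_op : ZifyClasses.BinOp (eq_op : Z -> Z -> bool) :=
  { ZifyClasses.TBOp := Z.eqb; ZifyClasses.TBOpInj := ltac:(by []) }.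
Add Zify BinOp Op_Z_eq_op.

Definition in_range (n v : Z) : bool := ((1 <=? v) && (v <=? n))%Z.

Lemma in_rangeP n v : reflect (1 <= v <= n)%Z (in_range n v).
Proof. by rewrite /in_range; apply: (iffP idP); lia. Qed.

Definition strip_graph (n : Z) : rel Z :=
  fun u v => [&& in_range n u, in_range n v & strip_adj u v].

Lemma strip_graph_closed n u v : strip_graph n u v -> in_range n v.
Proof. by case/and3P. Qed.

Lemma H_adj_strip u v : 0 < u -> 0 < v -> H_adj u v = strip_adj (Z.of_nat u) (Z.of_nat v).
Proof.
move=> u_gt0 v_gt0; have [u_small|u_large] := leqP u 7; have [v_small|v_large] := leqP v 7.
- have table : all (fun u => all (fun v => H_adj u v == strip_adj (Z.of_nat u) (Z.of_nat v))
                                 (iota 1 7)) (iota 1 7) by vm_compute.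
  have u_in : u \in iota 1 7 by rewrite mem_iota; lia.
  have v_in : v \in iota 1 7 by rewrite mem_iota; lia.
  exact/eqP/(allP (allP table u u_in)).
all: rewrite /H_adj /H_lt; apply/idP/strip_adjP; case: ifP; case: ifP; lia.
Qed.

Definition label n (i : 'I_n) : Z := Z.of_nat i + 1.

Section Labels.

Variable n : nat.
Local Notation N := (Z.of_nat n).

Lemma label_inj : injective (@label n).
Proof. by move=> i j; rewrite /label => eq_ij; apply: ord_inj; lia. Qed.

Lemma label_in_range (i : 'I_n) : in_range N (label i).
Proof. by have := ltn_ord i; rewrite /in_range /label; lia. Qed.

Lemma in_range_label v : in_range N v -> exists i : 'I_n, v = label i.
Proof.
move=> /in_rangeP Dv; have lt_v : Z.to_nat (v - 1)%Z < n by lia.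
by exists (Ordinal lt_v); rewrite /label /=; lia.
Qed.

Lemma strip_graph_label (i j : 'I_n) : strip_graph N (label i) (label j) = H n i j.
Proof.
rewrite /strip_graph !label_in_range /H H_adj_strip //.
by congr strip_adj; rewrite /label; lia.
Qed.

Lemma cop_wins_within_H k c R :
  cop_wins_within (strip_graph N) k (label c) (map (@label n) R) <-> cop_wins_within (H n) k c R.
Proof.
have label_onto (i : 'I_n) v : strip_graph N (label i) v -> exists j : 'I_n, v = label j.
  by move=> /strip_graph_closed; apply: in_range_label.
exact: (cop_wins_within_map label_inj strip_graph_label label_onto).
Qed.

End Labels.

(** * The bounds for H(4l + 2) *)

Section StripGame.

Variable l : nat.
Hypothesis hl : 2 <= l.
Local Notation n := (4 * l + 2).
Local Notation N := (Z.of_nat n).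
Local Notation L := (Z.of_nat l).
Local Notation G := (strip_graph N).

Let hlZ : (2 <= L)%Z. Proof. lia. Qed.
Let hnZ : N = (4 * L + 2)%Z. Proof. lia. Qed.

Lemma strip_graph_in u v : in_range N u -> in_range N v -> G u v = strip_adj u v.
Proof. by rewrite /strip_graph => -> ->. Qed.

Lemma catch_from_home h r : (h = 1 \/ h = 2)%Z -> in_range N r -> cop_catches_within G (n - 4) h r.
Proof.
move=> home Dr; have Dh : in_range N h by apply/in_rangeP; lia.
have home_bound := capt1_from_home hlZ hnZ home (elimT (in_rangeP _ _) Dr).
apply: (cop_catches_within_potential (@strip_graph_closed N)
          (phi := fun c r => Z.to_nat (capt1 N c r))) Dh Dr _; last by lia.
- by move=> c r' /in_rangeP Dc /in_rangeP Dr'; have := capt1_gt0 hlZ hnZ Dc Dr'; lia.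
- move=> c r' Dc Dr'; rewrite strip_graph_in // => far.
  move/in_rangeP in Dc; move/in_rangeP in Dr'.
  have [Dc' cc'] := cop_step_adj hlZ hnZ Dc Dr' far.
  exists (cop_step c r'); first by rewrite strip_graph_in //; apply/in_rangeP.
  move=> r'' /and3P[_ /in_rangeP Dr'' r'r''].
  have := cop_step_decreases hlZ hnZ Dc Dr' Dr'' far r'r''.
  by have := capt1_gt0 hlZ hnZ Dc' Dr''; lia.
Qed.

Lemma walk_home d X p R :
  in_range N p -> ((p + 1) / 4 <= Z.of_nat d)%Z -> all (in_range N) R ->
  (forall h R', (h = 1 \/ h = 2)%Z -> all (in_range N) R' -> size R' <= size R ->
     cop_wins_within G X h R') ->
  cop_wins_within G (d + X) p R.
Proof.
elim: d p R => [|d IHd] p R /in_rangeP Dp le_d DR win_home.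
  by apply: win_home => //; zlia.
have [p_home|p_far] := Z.le_gt_cases p 2.
  by apply: cop_wins_within_le (leq_addl _ _) _; apply: win_home => //; lia.
rewrite addSn /=; right; exists (step_down p).
  by rewrite /strip_graph /in_range /strip_adj /step_down; decide_ifs; lia.
move=> R'' mv; apply: IHd.
- by apply/in_rangeP; rewrite /step_down; decide_ifs; lia.
- by rewrite /step_down; decide_ifs; zlia.
- apply/allP => x; rewrite mem_filter => /andP[_].
  exact: (allP (robber_moves_closed (@strip_graph_closed N) mv)).
- move=> h R' home DR' size_R'; apply: win_home => //.
  by rewrite (leq_trans size_R') // size_filter (leq_trans (count_size _ _)) //
    -(all2_size mv) size_filter count_size.
Qed.

Lemma win_from_home j h R : (h = 1 \/ h = 2)%Z -> all (in_range N) R -> size R <= j.+1 ->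
  cop_wins_within G ((n - 4) + j * (l + (n - 4))) h R.
Proof.
elim: j h R => [|j IHj] h R home DR size_R; case: R DR size_R => [|r R] DR size_R;
  try exact: cop_wins_within_nil; case/andP: (DR) => Dr _.
- apply: (cop_catches_then_wins (@strip_graph_closed N) (catch_from_home home Dr)
    (mem_head r R)) => c' [|r' R'] //= _ _; move: size_R => /=; lia.
- have -> : n - 4 + j.+1 * (l + (n - 4)) = n - 4 + (l + (n - 4 + j * (l + (n - 4)))) by lia.
  apply: (cop_catches_then_wins (@strip_graph_closed N) (catch_from_home home Dr)
    (mem_head r R)) => c' R' Dc' DR' size_R'.
  apply: walk_home => //; first by move: Dc' => /in_rangeP; zlia.
  move=> h' R'' home' DR'' size_R''; apply: IHj => //.
  by rewrite (leq_trans size_R'') // -ltnS (leq_trans size_R' size_R).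
Qed.

Lemma capt_H_upper m : cop_guarantees (H n) m.+1 ((n - 4) + m * (l + (n - 4))).
Proof.
have n_gt0 : 0 < n by lia.
exists (Ordinal n_gt0) => R0 size_R0; apply/cop_wins_within_H.
rewrite (map_filter_neq (@label_inj n)).
apply: win_from_home; first by left; rewrite /label.
- by apply/allP => x; rewrite mem_filter => /andP[_ /mapP[i _ ->]]; apply: label_in_range.
- by rewrite size_filter (leq_trans (count_size _ _)) // size_map size_R0.
Qed.

(* Positions in which the cop, to move, needs at least [v] rounds: a block of [j] robbers on one
   vertex, or the block scattered by the trap. *)
Inductive escape (v : nat) : Z -> seq Z -> Prop :=
| EscapeStack c r j of in_range N c & in_range N r & ~~ strip_adj c r & 0 < j <= 3 &
    (Z.of_nat v <= capt1 N c r + (Z.of_nat j - 1) * (N - 4 + L))%Z :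
    escape v c (nseq j r)
| EscapeSplit j of 0 < j <= 3 & (Z.of_nat v <= 1 + (Z.of_nat j - 1) * (N - 4 + L))%Z :
    escape v (N - 4)%Z (take j [:: N - 3; N - 1; N]%Z).

Lemma escape_nonempty v c R : escape v c R -> R != [::].
Proof. by case=> [c' r [|j]|[|j]]. Qed.

Lemma escape_stacked v c r j :
  in_range N c -> in_range N r -> ~~ strip_adj c r -> 0 < j <= 3 ->
  (Z.of_nat v <= capt1 N c r + (Z.of_nat j - 1) * (N - 4 + L))%Z ->
  escape v c [seq x <- nseq j r | x != c].
Proof.
move=> Dc Dr far_cr j_3 le_v; rewrite filter_nseq.
have -> : r != c by apply: contraNneq far_cr => ->; apply/strip_adjP; left.
by rewrite mul1n; apply: EscapeStack.
Qed.

Ltac decide_Z_eqs :=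
  repeat match goal with
  | |- context [@eq_op _ ?x ?y] =>
    first [ have -> : (x == y) = true by lia | have -> : (x == y) = false by lia ]
  end.

Ltac solve_moves := rewrite ?/robber_moves /=; unfold strip_graph, in_range, strip_adj; lia.

Ltac solve_escape := rewrite ?/in_range ?/strip_adj; lia.

Lemma escape_stack_step v c r j c' :
  in_range N c -> in_range N r -> ~~ strip_adj c r -> 0 < j <= 3 ->
  (Z.of_nat v.+2 <= capt1 N c r + (Z.of_nat j - 1) * (N - 4 + L))%Z -> G c c' ->
  exists2 R'', robber_moves G [seq x <- nseq j r | x != c'] R'' &
               escape v.+1 c' [seq x <- R'' | x != c'].
Proof.
move=> Dc Dr far_cr j_3 le_v /and3P[_ Dc' cc'].
move/in_rangeP: (Dc) => c_range; move/in_rangeP: (Dr) => r_range.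
move/in_rangeP: (Dc') => c'_range.
have r_c' : r != c' by apply: contraNneq far_cr => ->.
rewrite filter_nseq r_c' mul1n.
have [/andP[/eqP ec' /eqP er]|not_trap] := boolP ((c' == N - 4)%Z && (r == N)).
  subst c' r; have trap := capt1_trap hlZ hnZ c_range cc' far_cr.
  exists (take j [:: N - 3; N - 1; N]%Z).
    by case: j j_3 {le_v} => [|[|[|[|j]]]] // _; solve_moves.
  have -> : [seq x <- take j [:: N - 3; N - 1; N]%Z | x != (N - 4)%Z] =
            take j [:: N - 3; N - 1; N]%Z.
    by apply/all_filterP; case: j j_3 {le_v} => [|[|[|[|j]]]] //= _; lia.
  by apply: EscapeSplit => //; lia.
have {}not_trap : ~ (c' = N - 4 /\ r = N)%Z by lia.
have [[Dt [rt c't]] step] := evade_spec hlZ hnZ c_range r_range c'_range far_cr cc' not_trap.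
exists (nseq j (evade N r c')).
  by rewrite /robber_moves all2_nseq /strip_graph Dr rt (introT (in_rangeP _ _) Dt) orbT.
by apply: escape_stacked => //; [apply/in_rangeP | lia].
Qed.

Lemma top_moves c' : G (N - 4)%Z c' ->
  (c' = N - 8 \/ c' = N - 7 \/ c' = N - 5 \/ c' = N - 4 \/ c' = N - 3 \/ c' = N - 1 \/ c' = N)%Z.
Proof. by rewrite /strip_graph /in_range /strip_adj; lia. Qed.

Lemma escape_split_step v j c' :
  0 < j <= 3 -> (Z.of_nat v.+2 <= 1 + (Z.of_nat j - 1) * (N - 4 + L))%Z -> G (N - 4)%Z c' ->
  exists2 R'', robber_moves G [seq x <- take j [:: N - 3; N - 1; N]%Z | x != c'] R'' &
               escape v.+1 c' [seq x <- R'' | x != c'].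
Proof.
have [F8 [F7 [F5 [F31 [F13 [F02 [F82 [F72 F42]]]]]]]] := capt1_near_top hlZ hnZ.
move=> + + /top_moves c'_top.
case: j => [|[|[|[|j]]]] // _ le_v; first lia.
(* The seven moves of the cop, against two robbers and then against three. *)
all: case_or; subst c'; rewrite /=; decide_Z_eqs; rewrite /=.
- by exists (nseq 2 (N - 2)%Z); [solve_moves | apply: escape_stacked; solve_escape].
- by exists (nseq 2 (N - 2)%Z); [solve_moves | apply: escape_stacked; solve_escape].
- by exists (nseq 2 N); [solve_moves | apply: escape_stacked; solve_escape].
- by exists (nseq 2 (N - 2)%Z); [solve_moves | apply: escape_stacked; solve_escape].
- by exists (nseq 1 (N - 1)%Z); [solve_moves | apply: escape_stacked; solve_escape].
- by exists (nseq 1 (N - 3)%Z); [solve_moves | apply: escape_stacked; solve_escape].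
- by exists (nseq 2 (N - 2)%Z); [solve_moves | apply: escape_stacked; solve_escape].
- by exists (nseq 3 N); [solve_moves | apply: escape_stacked; solve_escape].
- by exists (nseq 3 N); [solve_moves | apply: escape_stacked; solve_escape].
- by exists (nseq 3 N); [solve_moves | apply: escape_stacked; solve_escape].
- exists [:: N - 3; N - 1; N]%Z; first by solve_moves.
  by rewrite /=; decide_Z_eqs; apply: (@EscapeSplit _ 3) => //; lia.
- by exists (nseq 2 (N - 1)%Z); [solve_moves | apply: escape_stacked; solve_escape].
- by exists (nseq 2 (N - 3)%Z); [solve_moves | apply: escape_stacked; solve_escape].
- by exists (nseq 2 (N - 2)%Z); [solve_moves | apply: escape_stacked; solve_escape].
Qed.

Lemma escape_step c R v c' : escape v.+2 c R -> G c c' ->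
  exists2 R'', robber_moves G [seq x <- R | x != c'] R'' &
               escape v.+1 c' [seq x <- R'' | x != c'].
Proof.
by case=> [c0 r j Dc Dr far j_3 le_v | j j_3 le_v];
  [exact: escape_stack_step | exact: escape_split_step].
Qed.

Lemma capt_H_lower k : k < 2 * l + 3 * (n - 4) -> ~ cop_guarantees (H n) 3 k.
Proof.
move=> lt_k [c0 win].
have /in_rangeP Dc0 := label_in_range c0.
have [r0 [Dr0 far_r0] long_r0] := capt1_start hlZ hnZ Dc0.
have [x eq_r0] := in_range_label (introT (in_rangeP _ _) Dr0); subst r0.
have := win (nseq 3 x) (size_nseq 3 x).
move/cop_wins_within_H; rewrite (map_filter_neq (@label_inj n)) map_nseq.
apply: (robbers_escape (W := fun c R v => escape v c R)
          (fun c R v => @escape_nonempty v.+1 c R) escape_step _ lt_k).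
by apply: escape_stacked => //; [apply: label_in_range | apply/in_rangeP | lia].
Qed.

End StripGame.

Theorem mainTheorem5 (l : nat) (hl : 2 <= l) :
  capt_is (H (4 * l + 2)) 3 (2 * l + 3 * ((4 * l + 2) - 4)).
Proof.
split; last exact: capt_H_lower.
have -> : 2 * l + 3 * (4 * l + 2 - 4) = (4 * l + 2 - 4) + 2 * (l + (4 * l + 2 - 4)) by lia.
exact: capt_H_upper.
Qed.
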